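(* Let $f:X\to X$ be a homeomorphism of a compact metric space $(X,d)$. If $f$ has a specification point, then $f$ has the specification property.
   Context: $f$ has the specification property if for every $\varepsilon>0$ there is $K>0$ such that for any finite sequence of points $x_0,\dots,x_n\in X$ and integers $a_0\le b_0,\dots,a_n\le b_n$ with $a_{i+1}-b_i\ge K$ for every $i$, there is $y\in X$ with $d(f^j(y),f^j(x_i))<\varepsilon$ for $a_i\le j\le b_i$, $i=0,\dots,n$. A point $x\in X$ is a specification point of $f$ if for every $\varepsilon>0$ there is $K>0$ such that for any finite sequence of points $x=x_0,x_1,\dots,x_n\in X$ (with first point equal to $x$) and integers $a_0\le b_0,\dots,a_n\le b_n$ with $a_{i+1}-b_i\ge K$ for every $i$, there is $y\in X$ with $d(f^j(y),f^j(x_i))<\varepsilon$ for $a_i\le j\le b_i$, $i=0,\dots,n$. *)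

From HB Require Import structures.
From mathcomp Require Import all_boot all_order all_algebra.
From mathcomp Require Import all_classical all_reals all_analysis.
Set Implicit Arguments. Unset Strict Implicit. Unset Printing Implicit Defensive.
Import Order.TTheory GRing.Theory Num.Theory.
Local Open Scope ring_scope.

Definition homeomorphism {T : topologicalType} (f g : T -> T) : Prop :=
  [/\ continuous f, continuous g, cancel f g & cancel g f].

(* integer iterate f^j of a bijection f with inverse g:
   f^j = f o ... o f (j times) for j >= 0, and g^(-j) for j < 0 *)
Definition iterz {T : Type} (f g : T -> T) (j : int) (x : T) : T :=
  match j with
  | Posz n => iter n f x
  | Negz n => iter n.+1 g x
  end.

(* the shadowing condition for the orbit segments (xs i, [a i, b i]), i = 0..n *)
Definition spec_condition {R : realType} {X : metricType R} (f g : X -> X)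
  (eps : R) (K : nat) (x0 : option X) : Prop :=
  forall (n : nat) (xs : nat -> X) (a b : nat -> int),
    (if x0 is Some x then xs 0%N = x else True) ->
    (forall i, (i <= n)%N -> a i <= b i) ->
    (forall i, (i < n)%N -> a i.+1 - b i >= K%:Z) ->
    exists y : X, forall i, (i <= n)%N -> forall j : int, a i <= j <= b i ->
      mdist (iterz f g j y) (iterz f g j (xs i)) < eps.

Definition has_specification {R : realType} {X : metricType R} (f g : X -> X)
  : Prop :=
  forall eps : R, 0 < eps -> exists K : nat, (0 < K)%N /\ spec_condition f g eps K None.

(* x is a specification point (the first point of the sequence equals x) *)
Definition is_specification_point {R : realType} {X : metricType R}
  (f g : X -> X) (x : X) : Prop :=
  forall eps : R, 0 < eps -> exists K : nat, (0 < K)%N /\ spec_condition f g eps K (Some x).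

(* Given orbit segments (x_i, [a_i, b_i]) with gaps at least K, put the
   specification point x in front of them on the one-point segment
   [a_0 - K, a_0 - K]. Since times range over the integers, this is always
   possible, and a point shadowing the extended family shadows the given one. *)
From HB Require Import structures.
From mathcomp Require Import all_boot all_order all_algebra.
From mathcomp Require Import all_classical all_reals all_analysis.
Import Order.TTheory GRing.Theory Num.Theory.
Local Open Scope ring_scope.
Local Open Scope classical_set_scope.

Lemma spec_condition_forget_point (R : realType) (X : metricType R)
    (f g : X -> X) (eps : R) (K : nat) (x : X) :
  spec_condition f g eps K (Some x) -> spec_condition f g eps K None.
Proof.
move=> specx n xs a b _ le_ab gap_ab.
pose xs' i := if i is i'.+1 then xs i' else x.
pose a' i := if i is i'.+1 then a i' else a 0%N - K%:Z.
pose b' i := if i is i'.+1 then b i' else a 0%N - K%:Z.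
have le_ab' i : (i <= n.+1)%N -> a' i <= b' i.
  by case: i => [|i] /= ?; [rewrite lexx | exact: le_ab].
have gap_ab' i : (i < n.+1)%N -> a' i.+1 - b' i >= K%:Z.
  case: i => [|i] /= ?; last exact: gap_ab.
  by rewrite opprB addrCA subrr addr0.
have [y shadow_y] := specx n.+1 xs' a' b' erefl le_ab' gap_ab'.
by exists y => i le_in j; exact: (shadow_y i.+1 le_in j).
Qed.

Lemma specification_point_specification (R : realType) (X : metricType R)
    (f g : X -> X) (x : X) :
  is_specification_point f g x -> has_specification f g.
Proof.
move=> specx eps eps_gt0; have [K [K_gt0 specK]] := specx eps eps_gt0.
by exists K; split; last exact: spec_condition_forget_point specK.
Qed.

Theorem proposition7p1 (R : realType) (X : metricType R) (f g : X -> X)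
  (hX : compact [set: X]) (hf : homeomorphism f g) :
  (exists x : X, is_specification_point f g x) -> has_specification f g.
Proof. by case=> x; exact: specification_point_specification. Qed.
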